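(* Let $B$ be a norming region and $x\in S$. Let $(X_n)_{n\ge0}$ be a Markov chain with law $P_h^x$, regarded as the quasi-path $[w]$ with $w_n=X_n$ for $n\ge0$ and $w_n=\partial$ for $n<0$. Then the random coloured tree obtained by applying the $B$-biased decoration kernel $\bar\Gamma^{\mathrm{deco}}$ to it has law $\bar{\mathbb P}^{(x,\mathrm{blue})}_B$. In particular, $P_h^x$-almost every path enters $B$.
   Context: $S$ countable, $p=(p_{x,y})$ stochastic on $S$, $(d_x)_{x\in S}$ offspring distributions on $\mathbb N_0$, $m_x=\sum_m m\,d_x(m)$, $q_{x,y}=m_xp_{x,y}$, $Q=(q_{x,y})$, Green's function $g=\sum_{n\ge0}Q^n$ assumed finite entrywise. In a branching Markov chain (BMC$(d,p)$: each individual at $z$ independently has a $d_z$-distributed number of children at independent $p(z,\cdot)$-distributed locations; individuals carry independent uniform labels in $[0,1]$ and a pointer to their parent's label), $\mathcal H_B$ is the set of individuals located in $B$ with no strict ancestor located in $B$. A norming region is a finite $B\subset S$ with $\sum_{y\in B}g(x,y)>0$ for all $x$; $h(x)=\mathbb E^x[\#\mathcal H_B]\in(0,\infty)$. $P_h^x$: law of the Markov chain started at $x$ with substochastic transition matrix $p^h_{x,y}=\mathbf 1_{B^c}(x)q_{x,y}h(y)/h(x)$, sent to an absorbing cemetery $\partial\notin S$ with the missing mass. $d^{\mathrm{s.b.}}_x(n)=n\,d_x(n)/m_x$. Quasi-paths: $\bar S=S\cup\{\partial\}$; a path $w\in\bar S^{\mathbb Z}$ with $w_n\in S$ exactly for $t_\partial\le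 n<t^\partial$ ($t_\partial<t^\partial$ in $\mathbb Z\cup\{\pm\infty\}$) and $w_n\to\partial$ as $n\to-\infty$; $[w]$ its class modulo time shifts. $B$-biased decoration $\bar\Gamma^{\mathrm{deco}}([w],\cdot)$: (1) for each $k\in\mathbb Z\cap[t_\partial,t^\partial)$ create a blue individual with independent uniform label $i_k$ located at $w_k$, with predecessor $i_{k-1}$ (no predecessor if $k=t_\partial$); (2) to each such spine individual at $x\notin B$ attach independently, with probability $d^{\mathrm{s.b.}}_x(n)$, $n-1$ white children at independent $p(x,\cdot)$-locations with uniform labels, each the root of an independent white BMC$(d,p)$; (3) each spine individual at $x\in B$ is the root of an independent white BMC$(d,p)$. $B$-biased BMC: two-type BMC with types white/blue; white individuals and blue individuals in $B$ reproduce as in BMC$(d,p)$ with white children; a blue individual at $x\notin B$ has $n$ children with ordered locations $y_1,\dots,y_n$ with probability $\frac1{h(x)}d_x(n)\prod_kp_{x,y_k}\sum_kh(y_k)$, and then the $k$-th is coloured blue with probability $h(y_k)/\sum_lh(y_l)$, the others white. $\bar{\mathbb P}^{(x,\mathrm{blue})}_B$ is its law started from a single blue individual at $x$ (children receiving independent uniform labels). *)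

From HB Require Import structures.
From Stdlib Require Import List Permutation.
From mathcomp Require Import all_boot all_order all_algebra.
From mathcomp Require Import boolp classical_sets cardinality reals ereal esum.

Set Implicit Arguments.
Unset Strict Implicit.
Unset Printing Implicit Defensive.
Import Order.TTheory GRing.Theory Num.Theory.
Local Open Scope classical_set_scope.
Local Open Scope ring_scope.

(* Finite marked plane trees.  A mark is (location, colour); colour true =  *)
(* blue, false = white.  Children are listed in order (the order in which   *)
(* the BMC generates the ordered locations y_1,...,y_n).                    *)
Inductive mtree (S : Type) : Type := Node of (S * bool) & seq (mtree S).

HB.instance Definition _ (S : Type) := gen_eqMixin (mtree S).
HB.instance Definition _ (S : Type) := gen_choiceMixin (mtree S).

Definition mark (S : Type) (t : mtree S) : S * bool := let: Node a _ := t in a.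
Definition kids (S : Type) (t : mtree S) : seq (mtree S) := let: Node _ ts := t in ts.

(* Isomorphism of marked rooted trees = equality after forgetting the order  *)
(* of the children (equivalently: forgetting the i.i.d. uniform labels).     *)
Inductive tiso (S : Type) : mtree S -> mtree S -> Prop :=
| tiso_node (a : S * bool) (ts us us' : seq (mtree S)) :
    Permutation us' us -> Forall2 (@tiso S) ts us' ->
    tiso (Node a ts) (Node a us).

(* Probability that the depth-n truncation of a branching process, whose     *)
(* reproduction is governed by the local rule [loc] (loc a cs = probability  *)
(* that an individual with mark a has exactly the ordered list of children   *)
(* with marks cs), equals the plane tree t (root mark not included).         *)
Fixpoint tw (S : Type) (R : ringType) (loc : S * bool -> seq (S * bool) -> R)
  (n : nat) (t : mtree S) : R :=
  match n with
  | 0 => if kids t is [::] then 1 else 0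
  | n'.+1 => loc (mark t) (map (@mark S) (kids t)) *
             \prod_(u <- kids t) tw loc n' u
  end.

Fixpoint countH (S : Type) (B : set S) (t : mtree S) : nat :=
  let: Node a ts := t in
  if a.1 \in B then 1%N else sumn (map (@countH S B) ts).

Section BMC.
Variables (R : realType) (S : countType).
Variables (p : S -> S -> R) (d : S -> nat -> R) (B : set S).

Local Open Scope ereal_scope.

Definition mean (x : S) : \bar R := \esum_(n in [set: nat]) (n%:R * d x n)%:E.
Definition qm (x y : S) : \bar R := mean x * (p x y)%:E.

Fixpoint Qpow (n : nat) (x y : S) : \bar R :=
  match n with
  | 0 => (if x == y then 1 else 0)%:E
  | n'.+1 => \esum_(z in [set: S]) (qm x z * Qpow n' z y)
  end.

Definition green (x y : S) : \bar R := \esum_(n in [set: nat]) Qpow n x y.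

Definition norming_region : Prop :=
  finite_set B /\ forall x, 0 < \esum_(y in B) green x y.

Local Close Scope ereal_scope.

Definition white (cs : seq (S * bool)) : bool := all (fun c => ~~ c.2) cs.

Definition bmcw (z : S) (cs : seq (S * bool)) : R :=
  if white cs then d z (size cs) * \prod_(c <- cs) p z c.1 else 0.

Definition bmcLoc (a : S * bool) (cs : seq (S * bool)) : R := bmcw a.1 cs.

(* h(x) = E^x[#H_B]: expected number of individuals of BMC(d,p) started at x *)
(* in H_B, computed as the increasing limit (supremum) over the depth n of   *)
(* the expected number of such individuals in the depth-n truncation.        *)
Definition hB (x : S) : \bar R :=
  ereal_sup (range (fun n : nat =>
    \esum_(t in [set t : mtree S | mark t = (x, false)])
       ((tw bmcLoc n t) * (countH B t)%:R)%:E)).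

Definition hr (x : S) : R := fine (hB x).
Definition mr (x : S) : R := fine (mean x).

Definition ph (x y : S) : R :=
  if x \in B then 0 else mr x * p x y * hr y / hr x.
Definition kill (x : S) : R :=
  1 - fine (\esum_(y in [set: S]) (ph x y)%:E)%E.

Definition dsb (x : S) (n : nat) : R := n%:R * d x n / mr x.

(* Local rule of the tree obtained by decorating the P_h^x-chain: blue =    *)
(* spine.  A spine individual at z notin B gets n-1 white children with      *)
(* probability d^sb_z(n) (independent p(z,.)-locations) and, independently,  *)
(* one blue child (the next spine individual) at y with probability          *)
(* p^h_{z,y}, or none with the missing mass; the blue child is listed first. *)
Definition decoLoc (a : S * bool) (cs : seq (S * bool)) : R :=
  let: (z, blue) := a in
  if ~~ blue || (z \in B) then bmcw z cs
  else match cs with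
       | (y, true) :: ws =>
           if white ws then dsb z (size ws).+1 * \prod_(c <- ws) p z c.1 * ph z y
           else 0
       | _ =>
           if white cs then dsb z (size cs).+1 * \prod_(c <- cs) p z c.1 * kill z
           else 0
       end.

Definition bbLoc (a : S * bool) (cs : seq (S * bool)) : R :=
  let: (z, blue) := a in
  if ~~ blue || (z \in B) then bmcw z cs
  else if count (fun c => c.2) cs == 1%N then
    let sh := \sum_(c <- cs) hr c.1 in
    let hblue := \sum_(c <- cs | c.2) hr c.1 in
    (hr z)^-1 * d z (size cs) * (\prod_(c <- cs) p z c.1) * sh * (hblue / sh)
  else 0.

Local Open Scope ereal_scope.

(* Law of the isomorphism class (= labelled tree up to the labels) of the    *)
(* depth-n truncation, for a process started from one blue individual at x. *)
Definition tlaw (loc : S * bool -> seq (S * bool) -> R) (x : S) (n : nat)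
  (T : mtree S) : \bar R :=
  \esum_(t in [set t : mtree S | mark t = (x, true) /\ tiso t T]) (tw loc n t)%:E.

(* P_h^x(the chain is in B at time j and was outside B before) *)
Fixpoint hitB (j : nat) (x : S) : \bar R :=
  match j with
  | 0 => (if x \in B then 1 else 0)%:E
  | j'.+1 => if x \in B then 0
             else \esum_(y in [set: S]) ((ph x y)%:E * hitB j' y)
  end.

Definition enterB (x : S) : \bar R := \esum_(j in [set: nat]) hitB j x.

End BMC.

(* The function h is 1 on B and harmonic off B: h(z) = m_z sum_y p(z,y) h(y),
   because H_B-individuals below an individual at z, outside B, are those below its
   children; the Green function bound makes h finite and the norming region makes it
   positive.  Splitting the expected size of H_B by generation, h(x) is the sum over
   j of h(x) times the P_h^x-probability of first entering B at time j, so the chain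
   enters B almost surely.  Harmonicity also kills the missing mass of p^h off B.
   The decorated spine gives its blue child the first place among n children, with
   weight d^sb_z(n) p^h(z,y) prod_k p(z,y_k); averaging over the n rotations of the
   children list spreads the blue child over all places and yields the B-biased
   rule d_z(n) prod_k p(z,y_k) h(y_blue)/h(z).  As the law of an unordered tree sums
   over all orderings of each list of children, the two laws agree on isomorphism
   classes, by induction on the depth. *)

From HB Require Import structures.
From Stdlib Require Import List Permutation.
From mathcomp Require Import all_boot all_order all_algebra.
From mathcomp Require Import boolp classical_sets cardinality reals ereal esum.
From mathcomp Require Import functions fsbigop topology sequences.
From mathcomp Require Import ring.

Set Implicit Arguments.
Unset Strict Implicit.
Unset Printing Implicit Defensive.
Import Order.TTheory GRing.Theory Num.Theory.
Local Open Scope classical_set_scope.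
Local Open Scope ring_scope.

(** * Sums of extended reals *)

Section ExtendedSums.
Local Open Scope ereal_scope.
Context {R : realType} {T : choiceType}.
Implicit Types (I : set T) (a : T -> \bar R).

Lemma esum_ge_term I a i :
  I i -> (forall j, I j -> 0 <= a j) -> a i <= \esum_(j in I) a j.
Proof.
move=> Ii a0; apply: esum_ge; exists [set i].
  by split; [exact: finite_set1 | move=> j ->].
by rewrite fsbig_set1.
Qed.

Lemma esum_single I a i :
  I i -> (forall j, I j -> j <> i -> a j = 0) -> 0 <= a i ->
  \esum_(j in I) a j = a i.
Proof.
move=> Ii a0 ai0; have a0' j : I j -> 0 <= a j.
  by case: (pselect (j = i)) => [->//|/[swap] /a0 /[apply] ->].
rewrite (esumID [set i]) // setIidr; last by move=> j ->.
by rewrite esum_set1 // esum1 ?adde0 // => j [Ij /= nji]; exact: a0.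
Qed.

Lemma esum_gt0_term I a : (forall j, I j -> 0 <= a j) ->
  0 < \esum_(j in I) a j -> exists2 i, I i & 0 < a i.
Proof.
move=> a0 sa_gt0; apply: contrapT => no_pos; move: sa_gt0.
rewrite esum1 ?ltxx // => j Ij; apply/eqP; rewrite eq_le a0 // andbT leNgt.
by apply/negP => aj; apply: no_pos; exists j.
Qed.

Lemma esumZl_EFin I a (r : R) : (0 <= r)%R -> (forall j, I j -> 0 <= a j) ->
  \esum_(j in I) (r%:E * a j) = r%:E * \esum_(j in I) a j.
Proof.
move=> r0 a0; rewrite esum_mkcond [in RHS]esum_mkcond.
set b := fun j => if j \in I then a j else 0.
have b0 j : 0 <= b j by rewrite /b; case: ifPn => // /[!inE] /a0.
rewrite (eq_esum (b := fun j => r%:E * b j)); last first.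
  by move=> j _; rewrite /b; case: ifPn; rewrite ?mule0.
rewrite /esum -ereal_supZl //; last first.
  by apply/set0P; exists 0; exists set0; [exact: fsets_set0 | rewrite fsbig_set0].
congr ereal_sup; apply/seteqP; split=> y.
  by move=> [A hA <-]; exists (\sum_(j \in A) b j); [exists A | rewrite ge0_mule_fsumr].
by move=> [_ [A hA <-] <-]; exists A => //; rewrite ge0_mule_fsumr.
Qed.

Lemma esumZl I a (c : \bar R) : 0 <= c -> (forall j, I j -> 0 <= a j) ->
  \esum_(j in I) (c * a j) = c * \esum_(j in I) a j.
Proof.
case: c => [r||] // c0 a0; first exact: esumZl_EFin.
have [sa0|sa_neq0] := eqVneq (\esum_(j in I) a j) 0.
  have aj0 j : I j -> a j = 0.
    by move=> Ij; apply/eqP; rewrite eq_le a0 // andbT -sa0 esum_ge_term.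
  by rewrite sa0 mule0 esum1 // => j /aj0 ->; rewrite mule0.
have sa_gt0 : 0 < \esum_(j in I) a j by rewrite lt0e sa_neq0 esum_ge0.
have [i Ii ai_gt0] := esum_gt0_term a0 sa_gt0.
rewrite gt0_mulye //; apply/eqP; rewrite eq_le leey /=.
apply: le_trans (esum_ge_term (a := fun j => +oo * a j) Ii _).
  by rewrite gt0_mulye.
by move=> j Ij; rewrite mule_ge0 // a0.
Qed.

Lemma esumZr I a (c : \bar R) : 0 <= c -> (forall j, I j -> 0 <= a j) ->
  \esum_(j in I) (a j * c) = (\esum_(j in I) a j) * c.
Proof.
by move=> c0 a0; rewrite muleC -esumZl //; apply: eq_esum => j _; rewrite muleC.
Qed.

Lemma esum_fibers (K : choiceType) I (key : T -> K) a :
  (forall j, I j -> 0 <= a j) ->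
  \esum_(j in I) a j = \esum_(k in [set: K]) \esum_(j in I `&` [set j | key j = k]) a j.
Proof.
move=> a0; rewrite esum_esum; last by move=> k j _ [/a0].
rewrite (reindex_esum I _ (fun j => (key j, j))) //; split.
- by move=> j Ij; split.
- by move=> i j _ _ [].
- by move=> [k j] [_ [Ij /= <-]]; exists j.
Qed.

Lemma esum_exchange (U : choiceType) I (J : set U) (a : T -> U -> \bar R) :
  (forall i j, I i -> J j -> 0 <= a i j) ->
  \esum_(i in I) \esum_(j in J) a i j = \esum_(j in J) \esum_(i in I) a i j.
Proof.
move=> a0; rewrite esum_esum // esum_esum; last by move=> j i Jj Ii; exact: a0.
rewrite (reindex_esum (I `*`` (fun=> J)) _ (fun ij => (ij.2, ij.1))) //; split.
- by move=> [i j] [/= Ii Jj]; split.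
- by move=> [i j] [i' j'] _ _ /= [-> ->].
- by move=> [j i] [/= Jj Ii]; exists (i, j).
Qed.

End ExtendedSums.

Section ProductSums.
Local Open Scope ereal_scope.
Context {R : realType}.

Lemma esum_setXM (T U : choiceType) (I : set T) (J : set U)
    (a : T -> \bar R) (b : U -> \bar R) :
  (forall i, I i -> 0 <= a i) -> (forall j, J j -> 0 <= b j) ->
  \esum_(ij in I `*`` (fun=> J)) (a ij.1 * b ij.2) =
  (\esum_(i in I) a i) * \esum_(j in J) b j.
Proof.
move=> a0 b0; rewrite -(esum_esum (a := fun i j => a i * b j)); last first.
  by move=> i j Ii Jj; rewrite mule_ge0 ?a0 ?b0.
rewrite -esumZr ?esum_ge0 //.
by apply: eq_esum => i Ii; rewrite esumZl ?a0.
Qed.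

End ProductSums.

Section NatSums.
Local Open Scope ereal_scope.
Context {R : realType}.
Implicit Types f : nat -> \bar R.

Lemma ereal_sup_partial_sums f : (forall n, 0 <= f n) ->
  ereal_sup (range (fun n => \sum_(j < n.+1) f j)) = \esum_(j in [set: nat]) f j.
Proof.
move=> f0; rewrite -nneseries_esumT //.
have := ereal_nondecreasing_series (u_ := f) (P := xpredT) (N := 0%N) (fun n _ _ => f0 n).
move/ereal_nondecreasing_cvgn/cvg_lim => -> //.
apply/eqP; rewrite eq_le; apply/andP; split.
- apply: ge_ereal_sup => _ [n _ <-]; apply: ereal_sup_ubound; exists n.+1 => //.
  by rewrite big_mkord.
- apply: ge_ereal_sup => _ [n _ <-].
  apply: (@le_trans _ _ (\sum_(0 <= i < n.+1) f i)).
    by rewrite lee_sum_nneg_natr // => *; exact: f0.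
  by apply: ereal_sup_ubound; exists n => //; rewrite big_mkord.
Qed.

Lemma esum_nat_shift f : (forall n, 0 <= f n) -> f 0%N = 0 ->
  \esum_(j in [set: nat]) f j = \esum_(j in [set: nat]) f j.+1.
Proof.
move=> f0 f00; rewrite (esumID [set 0%N]) // setIidr // esum_set1 // f00 add0e.
apply: (reindex_esum _ _ succn); split.
- by move=> j _; split.
- by move=> i j _ _ [].
- by move=> [|j] [_ /= h] //; exists j.
Qed.

End NatSums.

Section SequenceSums.
Local Open Scope ereal_scope.
Context {R : realType} {T : choiceType}.
Implicit Types (F : seq T -> \bar R) (f g : T -> R).

Lemma esum_seq_by_size F : (forall ts, 0 <= F ts) ->
  \esum_(ts in [set: seq T]) F ts =
  \esum_(k in [set: nat]) \esum_(ts in [set ts : seq T | size ts = k]) F ts.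
Proof.
by move=> F0; rewrite (esum_fibers size) //; apply: eq_esum => k _; rewrite setTI.
Qed.

Lemma esum_size_cons k F : (forall ts, 0 <= F ts) ->
  \esum_(ts in [set ts : seq T | size ts = k.+1]) F ts =
  \esum_(u in [set: T]) \esum_(ts in [set ts : seq T | size ts = k]) F (u :: ts).
Proof.
move=> F0; rewrite (esum_esum (a := fun u ts => F (u :: ts))) //.
apply: reindex_esum; split.
- by move=> [u ts] [_ /= <-].
- by move=> [u ts] [v vs] _ _ /= [-> ->].
- by move=> [|u ts] //= [h]; exists (u, ts).
Qed.

Lemma esum_prod_size f : (forall u, (0 <= f u)%R) ->
  \esum_(u in [set: T]) (f u)%:E = 1 -> forall k,
  \esum_(ts in [set ts : seq T | size ts = k]) (\prod_(u <- ts) f u)%:E = 1.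
Proof.
move=> f0 f1; elim=> [|k IH].
  rewrite (_ : [set ts : seq T | size ts = 0%N] = [set [::]]).
    by rewrite esum_set1 ?big_nil.
  by apply/seteqP; split => [[]|ts ->].
rewrite esum_size_cons; last by move=> ts; rewrite lee_fin prodr_ge0.
rewrite -[RHS]f1; apply: eq_esum => u _.
under eq_esum do rewrite big_cons EFinM.
by rewrite esumZl ?IH ?mule1 ?lee_fin // => ts _; rewrite lee_fin prodr_ge0.
Qed.

Lemma esum_prod_sum_size f g : (forall u, (0 <= f u)%R) -> (forall u, (0 <= g u)%R) ->
  \esum_(u in [set: T]) (f u)%:E = 1 -> forall k,
  \esum_(ts in [set ts : seq T | size ts = k])
     (\prod_(u <- ts) f u * \sum_(u <- ts) g u)%:E =
  k%:R%:E * \esum_(u in [set: T]) (f u * g u)%:E.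
Proof.
move=> f0 g0 f1; set E := \esum_(u in _) _.
have E0 : 0 <= E by apply: esum_ge0 => u _; rewrite lee_fin mulr_ge0.
have prod0 ts : (0 <= \prod_(u <- ts) f u)%R by rewrite prodr_ge0.
have sum0 ts : (0 <= \sum_(u <- ts) g u)%R by rewrite sumr_ge0.
elim=> [|k IH].
  by rewrite mul0e esum1 // => ts /= /size0nil ->; rewrite !big_nil mulr0.
rewrite esum_size_cons; last by move=> ts; rewrite lee_fin mulr_ge0.
transitivity (\esum_(u in [set: T]) ((f u * g u)%:E + (f u)%:E * (k%:R%:E * E))).
  apply: eq_esum => u _.
  rewrite -IH -esumZl ?lee_fin //; last by move=> ts _; rewrite lee_fin mulr_ge0.
  rewrite -[(f u * g u)%:E]mule1 -(esum_prod_size f0 f1 k) -esumZl; first last.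
  - by move=> ts _; rewrite lee_fin.
  - by rewrite lee_fin mulr_ge0.
  rewrite -esumD => [|ts _|ts _]; rewrite ?lee_fin ?mulr_ge0 //.
  apply: eq_esum => ts _; rewrite !big_cons -!EFinM -EFinD; congr _%:E; ring.
rewrite esumD; first last.
- by move=> u _; rewrite mule_ge0 ?mule_ge0 ?lee_fin.
- by move=> u _; rewrite lee_fin mulr_ge0.
rewrite esumZr ?f1 ?mul1e ?mule_ge0 ?lee_fin //; last by move=> u _; rewrite lee_fin.
by rewrite -addn1 natrD EFinD ge0_muleDl ?lee_fin // mul1e addeC.
Qed.

End SequenceSums.

(** * Trees up to isomorphism *)

Section Forall2In.
Variable A : Type.
Implicit Types (r : A -> A -> Prop) (xs ys zs : seq A).

Lemma Forall2_refl_in r xs : (forall x, In x xs -> r x x) -> Forall2 r xs xs.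
Proof.
elim: xs => [|x xs IH] rxx; constructor; first by apply: rxx; left.
by apply: IH => y y_in; apply: rxx; right.
Qed.

Lemma Forall2_sym_in r xs ys : (forall x, In x xs -> forall y, r x y -> r y x) ->
  Forall2 r xs ys -> Forall2 r ys xs.
Proof.
move=> rsym rxy; elim: rxy rsym => [|x y xs' ys' rxy _ IH] rsym; constructor.
  by apply: rsym => //; left.
by apply: IH => z z_in; apply: rsym; right.
Qed.

Lemma Forall2_trans_in r xs ys zs :
  (forall x, In x xs -> forall y z, r x y -> r y z -> r x z) ->
  Forall2 r xs ys -> Forall2 r ys zs -> Forall2 r xs zs.
Proof.
move=> rtr rxy; elim: rxy zs rtr => [|x y xs' ys' r_xy _ IH] zs rtr ryz.
  by inversion ryz; constructor.
inversion ryz as [|y' z ys'' zs' r_yz ryz']; subst; constructor.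
  exact: rtr (or_introl erefl) _ _ r_xy r_yz.
by apply: IH ryz' => w w_in; apply: rtr; right.
Qed.

End Forall2In.

Lemma In_has (T : Type) (P : pred T) x (l : seq T) : In x l -> P x -> has P l.
Proof. by elim: l => //= y l IH [<- ->|/IH Px /Px ->]; rewrite ?orbT. Qed.

Lemma Permutation_perm_eq (T : eqType) (s t : seq T) : Permutation s t -> perm_eq s t.
Proof.
elim=> [|x l l' _ IH|x y l|l l' l'' _ h1 _ h2] //.
- by rewrite perm_cons.
- by apply/permP => f /=; rewrite addnCA.
- exact: perm_trans h1 h2.
Qed.

Lemma Permutation_rot (T : Type) i (s : seq T) : Permutation (rot i s) s.
Proof. by rewrite /rot -{3}(cat_take_drop i s); exact: Permutation_app_comm. Qed.

Definition rem_at (T : Type) (b : nat) (l : seq T) := take b l ++ drop b.+1 l.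

Lemma Permutation_rem_at (T : Type) (x0 : T) b (l : seq T) : (b < size l)%N ->
  Permutation l (nth x0 l b :: rem_at b l).
Proof.
move=> b_lt; rewrite /rem_at -{1}(cat_take_drop b l) (drop_nth x0 b_lt).
exact/Permutation_sym/Permutation_middle.
Qed.

Lemma size_rem_at (T : Type) b (l : seq T) : (b < size l)%N ->
  size (rem_at b l) = (size l).-1.
Proof.
move=> b_lt; rewrite /rem_at size_cat size_take b_lt size_drop.
by case: (size l) b_lt => // n; rewrite ltnS => b_le; rewrite subSS subnKC.
Qed.

Section TreeIsomorphism.
Variable S : Type.
Notation tree := (mtree S).
Implicit Types (t u v : tree) (ts us vs : seq tree).

Fixpoint mtree_nested_ind (P : tree -> Prop)
    (IH : forall a ts, (forall t, In t ts -> P t) -> P (Node a ts)) t : P t :=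
  let fix on_kids (ts : seq tree) : forall u, In u ts -> P u :=
    match ts return forall u, In u ts -> P u with
    | nil => fun u (u_in : In u nil) => False_ind (P u) u_in
    | cons t ts' => fun u (u_in : In u (t :: ts')) =>
        match u_in with
        | or_introl e => eq_ind t P (mtree_nested_ind IH t) u e
        | or_intror u_in' => on_kids ts' u u_in'
        end
    end in
  let: Node a ts := t in IH a ts (on_kids ts).

Definition perm_iso ts us :=
  exists us', Permutation us' us /\ Forall2 (@tiso S) ts us'.

Lemma tisoE a b ts us : tiso (Node a ts) (Node b us) <-> a = b /\ perm_iso ts us.
Proof.
split=> [h|[<- [us' [perm_us iso_ts]]]]; last exact: tiso_node perm_us iso_ts.
by inversion h; subst; split => //; exists us'.
Qed.

Lemma tiso_mark t u : tiso t u -> mark t = mark u.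
Proof. by case: t u => a ts [b us] /tisoE[]. Qed.

Lemma tiso_refl t : tiso t t.
Proof.
elim/mtree_nested_ind: t => a ts IH; apply/tisoE; split => //.
by exists ts; split => //; exact: Forall2_refl_in.
Qed.

Lemma tiso_sym t u : tiso t u -> tiso u t.
Proof.
elim/mtree_nested_ind: t u => a ts IH [b us] /tisoE [<- [us' [perm_us iso_ts]]].
have iso_us' : Forall2 (@tiso S) us' ts by apply: Forall2_sym_in iso_ts => t /IH.
have [vs [perm_vs iso_us]] := Permutation_Forall2 perm_us iso_us'.
by apply/tisoE; split => //; exists vs; split => //; apply: Permutation_sym.
Qed.

Lemma tiso_trans t u v : tiso t u -> tiso u v -> tiso t v.
Proof.
elim/mtree_nested_ind: t u v => a ts IH [b us] [c vs]
  /tisoE [<- [us' [perm_us iso_ts]]] /tisoE [<- [vs' [perm_vs iso_us]]].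
have [ws [perm_ws iso_us']] := Permutation_Forall2 (Permutation_sym perm_us) iso_us.
apply/tisoE; split => //; exists ws; split.
  exact: Permutation_trans (Permutation_sym perm_ws) perm_vs.
by apply: Forall2_trans_in iso_ts iso_us' => w /IH.
Qed.

Lemma perm_iso_Permutation ts us : Permutation ts us -> perm_iso ts us.
Proof.
by move=> perm_ts; exists ts; split => //; apply: Forall2_refl_in => t _; apply: tiso_refl.
Qed.

Lemma perm_iso_refl ts : perm_iso ts ts.
Proof. exact: perm_iso_Permutation. Qed.

Lemma perm_iso_trans ts us vs : perm_iso ts us -> perm_iso us vs -> perm_iso ts vs.
Proof.
move=> [us' [perm_us iso_ts]] [vs' [perm_vs iso_us]].
have [ws [perm_ws iso_us']] := Permutation_Forall2 (Permutation_sym perm_us) iso_us.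
exists ws; split; first exact: Permutation_trans (Permutation_sym perm_ws) perm_vs.
by apply: Forall2_trans_in iso_ts iso_us' => t _ u v; apply: tiso_trans.
Qed.

Lemma perm_iso_cons t u ts us : tiso t u -> perm_iso ts us -> perm_iso (t :: ts) (u :: us).
Proof. by move=> tu [us' [perm_us iso_ts]]; exists (u :: us'); split; constructor. Qed.

Lemma perm_iso_consK t u ts us :
  tiso t u -> perm_iso (t :: ts) (u :: us) -> perm_iso ts us.
Proof.
move=> tu [ws [perm_ws iso_tts]]; inversion iso_tts as [|t' w ts' ws' tw iso_ts]; subst.
have [l1 [l2 us_eq]] := Permutation_vs_cons_inv (Permutation_sym perm_ws).
case: l1 us_eq => [|v l1] /= [head_eq tail_eq]; subst.
  by exists ws'; split => //; apply: Permutation_cons_inv perm_ws.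
have perm_ws' : Permutation ws' (v :: l1 ++ l2).
  exact: (@Permutation_cons_app_inv _ _ (v :: l1) l2 w).
apply: (@perm_iso_trans _ (v :: l1 ++ l2)); first by exists ws'.
apply: (@perm_iso_trans _ (w :: l1 ++ l2)).
  by apply: perm_iso_cons (perm_iso_refl _); apply: tiso_trans (tiso_sym tu) tw.
exact/perm_iso_Permutation/Permutation_middle.
Qed.

Lemma perm_iso_nil ts : perm_iso ts [::] <-> ts = [::].
Proof.
split=> [[us' [perm_us iso_ts]]|->]; last exact: perm_iso_refl.
by rewrite (Permutation_nil (Permutation_sym perm_us)) in iso_ts; inversion iso_ts.
Qed.

Lemma perm_iso_size ts us : perm_iso ts us -> size ts = size us.
Proof.
move=> [us' [perm_us iso_ts]]; transitivity (size us').
  by elim: iso_ts => //= t u ts' us'' _ _ ->.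
by elim: perm_us => //= [x l l' _ ->|l l' l'' _ -> _ ->].
Qed.

End TreeIsomorphism.

Section ClassSums.
Context {R : realType} {S : Type}.
Notation tree := (mtree S).
Implicit Types (u : tree) (ts Us : seq tree).

Definition class_index u Us := find (fun U => `[< tiso u U >]) Us.

Lemma class_index_lt u ts Us : perm_iso (u :: ts) Us -> (class_index u Us < size Us)%N.
Proof.
move=> [us' [perm_us iso_uts]]; inversion iso_uts as [|u' v ts' vs uv _]; subst.
rewrite /class_index -has_find; apply: (@In_has _ _ v); last exact/asboolP.
exact: (Permutation_in _ perm_us (in_eq _ _)).
Qed.

Lemma class_index_tiso U0 u Us b :
  (b < size Us)%N -> class_index u Us = b -> tiso u (nth U0 Us b).
Proof.
by move=> + ub; rewrite -ub /class_index -has_find => /(nth_find U0)/asboolP.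
Qed.

Lemma class_index_tiso_eq u v Us : tiso u v -> class_index u Us = class_index v Us.
Proof.
move=> uv; apply: eq_find => U; apply/asboolP/asboolP => [uU|vU].
  exact: tiso_trans (tiso_sym uv) uU.
exact: tiso_trans uv vU.
Qed.

Lemma perm_iso_cons_rem_at U0 u ts Us b : (b < size Us)%N -> tiso u (nth U0 Us b) ->
  perm_iso (u :: ts) Us <-> perm_iso ts (rem_at b Us).
Proof.
move=> b_lt u_iso; have perm_Us := perm_iso_Permutation (Permutation_rem_at U0 b_lt).
split=> [uts_Us|ts_rem].
  exact: perm_iso_consK u_iso (perm_iso_trans uts_Us perm_Us).
apply: perm_iso_trans (perm_iso_cons u_iso ts_rem) _.
exact/perm_iso_Permutation/Permutation_sym/Permutation_rem_at.
Qed.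

Lemma perm_iso_cons_fiber Us b : (b < size Us)%N ->
  [set p : tree * seq tree | perm_iso (p.1 :: p.2) Us] `&`
    [set p | class_index p.1 Us = b] =
  [set u | class_index u Us = b] `*`` (fun=> [set ts | perm_iso ts (rem_at b Us)]).
Proof.
case: Us => // U0 Us' b_lt; set Us := U0 :: Us'.
apply/seteqP; split=> [[u ts] [/= uts_Us ub]|[u ts] [/= ub ts_rem]]; split => //.
  exact/(perm_iso_cons_rem_at ts b_lt (class_index_tiso U0 b_lt ub)).
exact/(perm_iso_cons_rem_at ts b_lt (class_index_tiso U0 b_lt ub)).
Qed.

Variables (D D' : tree -> R).
Hypotheses (D0 : forall t, (0 <= D t)%R) (D'0 : forall t, (0 <= D' t)%R).
Hypothesis eq_class_sums : forall U,
  (\esum_(u in [set u | tiso u U]) (D u)%:E = \esum_(u in [set u | tiso u U]) (D' u)%:E)%E.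

Lemma eq_class_index_sums Us b : (b < size Us)%N ->
  (\esum_(u in [set u | class_index u Us = b]) (D u)%:E =
   \esum_(u in [set u | class_index u Us = b]) (D' u)%:E)%E.
Proof.
case: Us => // U0 Us' b_lt; set Us := U0 :: Us'; set U := nth U0 Us b.
have [Ub|Unb] := eqVneq (class_index U Us) b.
  rewrite (_ : [set u | _] = [set u | tiso u U]); first exact: eq_class_sums.
  apply/seteqP; split=> u => [/(class_index_tiso U0 b_lt) //|uU].
  exact: etrans (class_index_tiso_eq Us uU) Ub.
rewrite (_ : [set u | _] = set0) ?esum_set0 //; apply/seteqP; split=> // u ub.
move: Unb; rewrite -(class_index_tiso_eq Us (class_index_tiso U0 b_lt ub)).
by rewrite ub eqxx.
Qed.

Lemma eq_perm_iso_prod_sums Us :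
  (\esum_(ts in [set ts | perm_iso ts Us]) (\prod_(u <- ts) D u)%:E =
   \esum_(ts in [set ts | perm_iso ts Us]) (\prod_(u <- ts) D' u)%:E)%E.
Proof.
move: {2}(size Us) (erefl (size Us)) => n; elim: n Us => [|n IH] Us size_Us.
  rewrite (size0nil size_Us) (_ : [set ts | perm_iso ts [::]] = [set [::]]).
    by rewrite !esum_set1 ?big_nil.
  by apply/seteqP; split => ts /perm_iso_nil.
have consE : set_bij [set p : tree * seq tree | perm_iso (p.1 :: p.2) Us]
    [set ts | perm_iso ts Us] (fun p => p.1 :: p.2).
  split=> [p //|[u ts] [v vs] _ _ /= [-> ->] //|[|u ts] /= ts_Us].
    by move/perm_iso_size: ts_Us; rewrite size_Us.
  by exists (u, ts).
have prod0 (F : tree -> R) ts : (forall t, 0 <= F t)%R -> (0 <= \prod_(u <- ts) F u)%R.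
  by move=> F0; apply: prodr_ge0 => *.
rewrite !(reindex_esum _ _ _ _ consE) !(esum_fibers (fun p => class_index p.1 Us)) /=;
  try by move=> p _; rewrite lee_fin prod0.
apply: eq_esum => b _; have [b_lt|b_ge] := ltnP b (size Us); last first.
  rewrite (_ : _ `&` _ = set0) ?esum_set0 //; apply/seteqP; split=> // -[u ts] [/= + ub].
  by move/class_index_lt; rewrite ub ltnNge b_ge.
have esum_fiber_prod (F : tree -> R) : (forall t, 0 <= F t)%R ->
  (\esum_(p in [set u | class_index u Us = b]
               `*`` (fun=> [set ts | perm_iso ts (rem_at b Us)]))
     (\prod_(u <- p.1 :: p.2) F u)%:E =
   (\esum_(u in [set u | class_index u Us = b]) (F u)%:E) *
   \esum_(ts in [set ts | perm_iso ts (rem_at b Us)]) (\prod_(u <- ts) F u)%:E)%E.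
  move=> F0; rewrite -(esum_setXM (a := fun u => (F u)%:E)
                                  (b := fun ts => (\prod_(u <- ts) F u)%:E)).
  - by apply: eq_esum => -[u ts] _; rewrite big_cons EFinM.
  - by move=> u _; rewrite lee_fin.
  - by move=> ts _; rewrite lee_fin prod0.
rewrite perm_iso_cons_fiber // !esum_fiber_prod // eq_class_index_sums //.
by rewrite IH // size_rem_at // size_Us.
Qed.

End ClassSums.

(** * The branching Markov chain *)

Lemma tw_ge0 (R : realType) (S : Type) (loc : S * bool -> seq (S * bool) -> R) :
  (forall a cs, 0 <= loc a cs) -> forall n t, 0 <= tw loc n t.
Proof.
move=> loc0; elim=> [|n IH] [a ts] /=; first by case: ts.
by rewrite mulr_ge0 // prodr_ge0.
Qed.

Lemma esum_root (R : realType) (S : Type) (a : S * bool) (G : mtree S -> \bar R) :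
  (\esum_(t in [set t : mtree S | mark t = a]) G t =
   \esum_(ts in [set: seq (mtree S)]) G (Node a ts))%E.
Proof.
apply: reindex_esum; split=> [ts //|ts us _ _ [] //|[b ts] /= ->].
by exists ts.
Qed.

Lemma esum_white (R : realType) (S : choiceType) (G : S * bool -> \bar R) :
  (forall c, 0 <= G c)%E -> (forall y, G (y, true) = 0%E) ->
  (\esum_(c in [set: S * bool]) G c = \esum_(y in [set: S]) G (y, false))%E.
Proof.
move=> G0 G_blue; rewrite (esumID [set c : S * bool | c.2 = false]) //.
rewrite [X in (_ + X)%E]esum1 ?adde0; last by move=> [y []] [_ /= h] //; rewrite G_blue.
apply: (reindex_esum _ _ (fun y => (y, false))); split=> [y //|y y' _ _ [] //|].
by move=> [y []] [_ /= h] //; exists y.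
Qed.

Section BranchingMarkovChain.
Variables (R : realType) (S : countType) (p : S -> S -> R) (d : S -> nat -> R) (B : set S).
Hypothesis p0 : forall y z, 0 <= p y z.
Hypothesis psum : forall y, (\esum_(z in [set: S]) (p y z)%:E = 1)%E.
Hypothesis d0 : forall y n, 0 <= d y n.
Hypothesis dsum : forall y, (\esum_(n in [set: nat]) (d y n)%:E = 1)%E.

Notation tree := (mtree S).
Notation w := (tw (bmcLoc p d)).
Notation hr := (hr p d B).
Local Open Scope ereal_scope.

Lemma bmcw_ge0 z cs : (0 <= bmcw p d z cs)%R.
Proof. by rewrite /bmcw; case: ifP => // _; rewrite mulr_ge0 // prodr_ge0. Qed.

Lemma w_ge0 n t : (0 <= w n t)%R.
Proof. by apply: tw_ge0 => a cs; exact: bmcw_ge0. Qed.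

Lemma mean_ge0 y : 0 <= mean d y.
Proof. by apply: esum_ge0 => n _; rewrite lee_fin mulr_ge0 ?ler0n. Qed.

Definition child_weight z (n : nat) (u : tree) : R :=
  if (mark u).2 then 0%R else (p z (mark u).1 * w n u)%R.

Lemma child_weight_ge0 z n u : (0 <= child_weight z n u)%R.
Proof. by rewrite /child_weight; case: ifP => // _; rewrite mulr_ge0 // w_ge0. Qed.

Lemma bmcw_prodE z n (ts : seq tree) :
  (bmcw p d z (map (@mark S) ts) * \prod_(u <- ts) w n u =
   d z (size ts) * \prod_(u <- ts) child_weight z n u)%R.
Proof.
rewrite /bmcw size_map /white all_map; case: ifP => [white_ts|/negbT].
  rewrite -mulrA big_map -big_split /=; congr (_ * _)%R.
  apply: eq_big_seq => u u_in; rewrite /child_weight.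
  by move/allP: white_ts => /(_ u u_in) /= /negbTE ->.
rewrite -has_predC => /hasP [u u_in /=]; rewrite negbK => u_blue.
rewrite mul0r; apply/esym/eqP; rewrite mulf_eq0 prodf_seq_eq0; apply/orP; right.
by apply/hasP; exists u; rewrite // /child_weight u_blue eqxx.
Qed.

Lemma esum_white_child z (h : tree -> R) : (forall u, 0 <= h u)%R ->
  \esum_(u in [set: tree]) (if (mark u).2 then 0%R else (p z (mark u).1 * h u)%R)%:E =
  \esum_(y in [set: S]) ((p z y)%:E *
                         \esum_(u in [set u : tree | mark u = (y, false)]) (h u)%:E).
Proof.
move=> h0; have term0 u : 0 <= (if (mark u).2 then 0%R else (p z (mark u).1 * h u)%R)%:E.
  by rewrite lee_fin; case: ifP => // _; rewrite mulr_ge0.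
rewrite (esum_fibers (@mark S)) // esum_white; first last.
- by move=> y; rewrite esum1 // => u [_ /= ->].
- by move=> c; exact: esum_ge0.
apply: eq_esum => y _; rewrite setTI -esumZl_EFin //; last by move=> u _; rewrite lee_fin.
by apply: eq_esum => u /= ->.
Qed.

Lemma esum_child_weight_of_mass z n :
  (forall y, \esum_(t in [set t : tree | mark t = (y, false)]) (w n t)%:E = 1) ->
  \esum_(u in [set: tree]) (child_weight z n u)%:E = 1.
Proof.
move=> mass1; rewrite esum_white_child; last exact: w_ge0.
by rewrite -[RHS](psum z); apply: eq_esum => y _; rewrite mass1 mule1.
Qed.

Lemma esum_tw_bmcLoc n y :
  \esum_(t in [set t : tree | mark t = (y, false)]) (w n t)%:E = 1.
Proof.
elim: n y => [|n IH] y; rewrite esum_root /=.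
  by rewrite (esum_single (i := [::])) // => -[|u ts] // _ [].
have cw0 := child_weight_ge0 y n.
under eq_esum do rewrite /bmcLoc /= bmcw_prodE EFinM.
rewrite esum_seq_by_size; last by move=> ts; rewrite mule_ge0 ?lee_fin ?prodr_ge0.
rewrite -[RHS](dsum y); apply: eq_esum => k _.
rewrite (eq_esum (b := fun ts => (d y k)%:E * (\prod_(u <- ts) child_weight y n u)%:E)).
  rewrite esumZl_EFin // ?esum_prod_size ?mule1 //; first exact: esum_child_weight_of_mass.
  by move=> ts _; rewrite lee_fin prodr_ge0.
by move=> ts /= ->.
Qed.

Lemma esum_child_weight z n : \esum_(u in [set: tree]) (child_weight z n u)%:E = 1.
Proof. exact/esum_child_weight_of_mass/esum_tw_bmcLoc. Qed.

Definition meanH n y :=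
  \esum_(t in [set t : tree | mark t = (y, false)]) (w n t * (countH B t)%:R)%:E.

Lemma meanH_in n y : y \in B -> meanH n y = 1.
Proof.
move=> yB; rewrite -(esum_tw_bmcLoc n y); apply: eq_esum => -[a ts] /= ->.
by rewrite /= yB mulr1.
Qed.

Lemma meanH0_out y : y \notin B -> meanH 0 y = 0.
Proof.
move=> yNB; apply: esum1 => -[a [|u ts]] /= -> /=; last by rewrite mul0r.
by rewrite (negbTE yNB) mulr0.
Qed.

Lemma meanH_succ n z : z \notin B ->
  meanH n.+1 z = mean d z * \esum_(y in [set: S]) ((p z y)%:E * meanH n y).
Proof.
move=> zNB; set E := \esum_(y in _) _.
have cw0 := child_weight_ge0 z n.
have E0 : 0 <= E by apply: esum_ge0 => y _; rewrite mule_ge0 ?lee_fin ?esum_ge0 //;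
  move=> t _; rewrite lee_fin mulr_ge0 ?w_ge0.
have E_child : \esum_(u in [set: tree]) (child_weight z n u * (countH B u)%:R)%:E = E.
  rewrite /E /meanH -esum_white_child => [|u]; last by rewrite mulr_ge0 ?w_ge0.
  by apply: eq_esum => u _; rewrite /child_weight; case: ifP; rewrite ?mul0r // mulrA.
have countH_kids (ts : seq tree) :
    ((countH B (Node (z, false) ts))%:R = \sum_(u <- ts) (countH B u)%:R :> R)%R.
  by rewrite /= (negbTE zNB) sumnE big_map natr_sum.
rewrite /meanH esum_root /=.
under eq_esum do rewrite /bmcLoc /= bmcw_prodE countH_kids -mulrA EFinM.
rewrite esum_seq_by_size; last first.
  by move=> ts; rewrite mule_ge0 ?lee_fin ?mulr_ge0 ?prodr_ge0 ?sumr_ge0.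
rewrite /mean -esumZr //; last by move=> k _; rewrite lee_fin mulr_ge0.
apply: eq_esum => k _.
rewrite (eq_esum (b := fun ts => (d z k)%:E *
    (\prod_(u <- ts) child_weight z n u * \sum_(u <- ts) (countH B u)%:R)%:E)); last first.
  by move=> ts /= ->.
rewrite esumZl_EFin //; last by move=> ts _; rewrite lee_fin mulr_ge0 ?prodr_ge0 ?sumr_ge0.
rewrite esum_prod_sum_size ?esum_child_weight // E_child.
by rewrite muleA -EFinM mulrC.
Qed.

(* The expected number of individuals of generation [j] that lie in [H_B]. *)
Fixpoint genH (j : nat) (y : S) : \bar R :=
  match j with
  | 0%N => (if y \in B then 1 else 0)%:E
  | j'.+1 => if y \in B then 0 else
             mean d y * \esum_(x in [set: S]) ((p y x)%:E * genH j' x)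
  end.

Lemma genH_ge0 j y : 0 <= genH j y.
Proof.
elim: j y => [|j IH] y /=; first by case: ifP.
case: ifP => // _; rewrite mule_ge0 ?mean_ge0 // esum_ge0 // => x _.
by rewrite mule_ge0 ?lee_fin.
Qed.

Lemma meanH_sum_genH n y : meanH n y = \sum_(j < n.+1) genH j y.
Proof.
elim: n y => [|n IH] y.
  by rewrite big_ord1 /=; case: ifPn => yB; [exact: meanH_in | exact: meanH0_out].
rewrite big_ord_recl /=; case: ifPn => yB.
  by rewrite meanH_in // big1 ?adde0 // => i _; rewrite /= yB.
have pgenH0 x j : 0 <= (p y x)%:E * genH j x by rewrite mule_ge0 ?lee_fin ?genH_ge0.
rewrite add0e meanH_succ //.
rewrite (eq_esum (b := fun x => \sum_(j < n.+1) ((p y x)%:E * genH j x))); last first.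
  by move=> x _; rewrite IH ge0_sume_distrr // => j _; exact: genH_ge0.
rewrite esum_sum // ge0_sume_distrr; last by move=> i _; exact: esum_ge0.
by apply: eq_bigr => i _; rewrite add0n.
Qed.

Lemma hB_esum_genH y : hB p d B y = \esum_(j in [set: nat]) genH j y.
Proof.
transitivity (ereal_sup (range (meanH ^~ y))); first by [].
rewrite -ereal_sup_partial_sums; last by move=> j; exact: genH_ge0.
suff -> : meanH ^~ y = (fun n => \sum_(j < n.+1) genH j y) by [].
by apply/funext => n; exact: meanH_sum_genH.
Qed.

Lemma hB_ge0 y : 0 <= hB p d B y.
Proof. by rewrite hB_esum_genH esum_ge0 // => j _; exact: genH_ge0. Qed.

Lemma hB_in y : y \in B -> hB p d B y = 1.
Proof.
move=> yB; rewrite hB_esum_genH (esum_single (i := 0%N)) ?genH_ge0 //=; first by rewrite yB.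
by move=> [|j] //= _ _; rewrite yB.
Qed.

Lemma hB_harmonic z : z \notin B ->
  hB p d B z = mean d z * \esum_(x in [set: S]) ((p z x)%:E * hB p d B x).
Proof.
move=> zNB; have pgenH0 x j : 0 <= (p z x)%:E * genH j x.
  by rewrite mule_ge0 ?lee_fin ?genH_ge0.
rewrite hB_esum_genH esum_nat_shift; last by rewrite /= (negbTE zNB).
  rewrite /= (negbTE zNB) esumZl ?mean_ge0 //; last by move=> j _; exact: esum_ge0.
  rewrite esum_exchange //; congr (_ * _); apply: eq_esum => x _.
  by rewrite hB_esum_genH esumZl ?lee_fin // => j _; exact: genH_ge0.
by move=> j; exact: genH_ge0.
Qed.

Lemma Qpow_ge0 j y b : 0 <= Qpow p d j y b.
Proof.
elim: j y => [|j IH] y /=; first by case: eqP.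
by apply: esum_ge0 => x _; rewrite mule_ge0 // /qm mule_ge0 ?mean_ge0 ?lee_fin.
Qed.

Lemma genH_le_Qpow j y : genH j y <= \esum_(b in B) Qpow p d j y b.
Proof.
have Qpow_nneg j' x b : 0 <= Qpow p d j' x b by exact: Qpow_ge0.
elim: j y => [|j IH] y /=.
  case: ifPn => yB; last by apply: esum_ge0 => b _; case: eqP.
  apply: le_trans
    (esum_ge_term (a := fun b => (if y == b then 1 else 0)%:E) (i := y) _ _) => /=.
  - by rewrite eqxx.
  - by rewrite -in_setE.
  - by move=> b _; case: eqP.
case: ifPn => yB; first by apply: esum_ge0 => b _; exact: (Qpow_ge0 j.+1).
have pQ0 x b : 0 <= (p y x)%:E * Qpow p d j x b by rewrite mule_ge0 ?lee_fin.
apply: (@le_trans _ _ (mean d y * \esum_(x in [set: S])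
    \esum_(b in B) ((p y x)%:E * Qpow p d j x b))).
  apply: lee_wpmul2l; first exact: mean_ge0.
  by apply: le_esum => x _; rewrite esumZl ?lee_fin // lee_wpmul2l ?lee_fin ?IH.
rewrite esum_exchange // -esumZl ?mean_ge0 //; last by move=> b _; exact: esum_ge0.
apply: le_esum => b _; rewrite -esumZl ?mean_ge0 //.
by apply: le_esum => x _; rewrite /qm muleA.
Qed.

Hypothesis green_fin : forall y z, green p d y z < +oo.
Hypothesis B_norming : norming_region p d B.

Lemma hB_fin y : hB p d B y < +oo.
Proof.
have Qpow_nneg j x b : 0 <= Qpow p d j x b by exact: Qpow_ge0.
apply: (@le_lt_trans _ _ (\esum_(b in B) green p d y b)).
  rewrite hB_esum_genH /green -esum_exchange //.
  by apply: le_esum => j _; exact: genH_le_Qpow.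
case: B_norming => finB _; rewrite esum_fset //; last by move=> b _; exact: esum_ge0.
by rewrite fsbig_finite //; apply: lte_sum_pinfty => b _; exact: green_fin.
Qed.

Lemma hB_gt0_of_Qpow j y b : B b -> 0 < Qpow p d j y b -> 0 < hB p d B y.
Proof.
move=> Bb; elim: j y => [|j IH] y; have [yB|yNB] := boolP (y \in B).
- by rewrite hB_in.
- rewrite /=; case: eqP => [yb|]; last by rewrite ltxx.
  by rewrite yb (mem_set Bb) in yNB.
- by rewrite hB_in.
move=> /esum_gt0_term[x _|x _].
  by rewrite mule_ge0 ?Qpow_ge0 // /qm mule_ge0 ?mean_ge0 ?lee_fin.
rewrite /qm !mule_ge0_gt0 ?Qpow_ge0 ?mule_ge0 ?mean_ge0 ?lee_fin //.
move=> /andP[/andP[mean_gt0 pyx_gt0] /IH hx_gt0].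
rewrite hB_harmonic //; apply: mule_gt0 => //.
apply: lt_le_trans
  (esum_ge_term (a := fun x => (p y x)%:E * hB p d B x) (i := x) _ _) => //.
- exact: mule_gt0.
- by move=> x' _; rewrite mule_ge0 ?lee_fin ?hB_ge0.
Qed.

Lemma hB_gt0 y : 0 < hB p d B y.
Proof.
case: B_norming => _ /(_ y) /esum_gt0_term[b _|b Bb].
  by apply: esum_ge0 => j _; exact: Qpow_ge0.
by case/esum_gt0_term => [j _|j _]; [exact: Qpow_ge0 | exact: hB_gt0_of_Qpow].
Qed.

Lemma hBE y : hB p d B y = (hr y)%:E.
Proof. by rewrite /hr fineK // ge0_fin_numE ?hB_ge0 ?hB_fin. Qed.

Lemma hr_gt0 y : (0 < hr y)%R.
Proof. by rewrite /hr fine_gt0 // hB_gt0 hB_fin. Qed.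

Lemma hr_ge0 y : (0 <= hr y)%R.
Proof. exact/ltW/hr_gt0. Qed.

Lemma mean_out z : z \notin B -> mean d z = (mr d z)%:E /\ (0 < mr d z)%R.
Proof.
move=> zNB; have := hB_harmonic zNB; set X := \esum_(x in _) _.
have X0 : 0 <= X by apply: esum_ge0 => x _; rewrite mule_ge0 ?lee_fin ?hB_ge0.
have := hB_gt0 z; have := hB_fin z; have := mean_ge0 z.
rewrite /mr; case: (mean d z) => [r||] //= r0 hfin hpos hE.
  split => //; rewrite lt0r -lee_fin r0 andbT.
  by apply: contraTneq hpos => r_eq0; rewrite hE r_eq0 mul0e ltxx.
have [X_eq0|X_neq0] := eqVneq X 0; first by move: hpos; rewrite hE X_eq0 mule0 ltxx.
by move: hfin; rewrite hE gt0_mulye ?ltxx // lt0e X_neq0 X0.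
Qed.

Lemma esum_p_hr z : z \notin B ->
  \esum_(x in [set: S]) ((p z x * hr x)%R)%:E = (hr z / mr d z)%:E.
Proof.
move=> zNB; have [mean_z mr_gt0] := mean_out zNB.
have hz := hB_harmonic zNB; have hz_fin := hB_fin z.
rewrite (eq_esum (b := fun x => (p z x)%:E * hB p d B x)); last first.
  by move=> x _; rewrite hBE EFinM.
move: hz hz_fin; have : 0 <= \esum_(x in [set: S]) ((p z x)%:E * hB p d B x).
  by apply: esum_ge0 => x _; rewrite mule_ge0 ?lee_fin ?hB_ge0.
rewrite hBE mean_z; case: (\esum_(x in _) _) => [X||] //= _ hz _.
  have -> : hr z = (mr d z * X)%R by apply: EFin_inj; rewrite EFinM.
  by rewrite mulrAC mulfV ?mul1r // gt_eqF.
by move: hz; rewrite muleC gt0_mulye ?lte_fin.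
Qed.

Lemma kill_out z : z \notin B -> kill p d B z = 0%R.
Proof.
move=> zNB; have [_ mr_gt0] := mean_out zNB; have hr_neq0 := gt_eqF (hr_gt0 z).
rewrite /kill (eq_esum (b := fun y => (mr d z / hr z)%:E *
                                     ((p z y * hr y)%R)%:E)); last first.
  by move=> y _; rewrite /ph (negbTE zNB) -EFinM; congr _%:E; ring.
rewrite esumZl_EFin; last by move=> y _; rewrite lee_fin mulr_ge0 ?hr_ge0.
  by rewrite esum_p_hr // -EFinM /=; field; rewrite ?hr_neq0 ?gt_eqF.
by rewrite divr_ge0 ?hr_ge0 // ltW.
Qed.

Lemma ph_ge0 x y : (0 <= ph p d B x y)%R.
Proof.
rewrite /ph; case: ifP => // _.
by rewrite divr_ge0 ?mulr_ge0 ?hr_ge0 ?fine_ge0 ?mean_ge0.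
Qed.

Lemma hitB_ge0 j x : 0 <= hitB p d B j x.
Proof.
elim: j x => [|j IH] x /=; first by case: ifP.
by case: ifP => // _; apply: esum_ge0 => y _; rewrite mule_ge0 ?lee_fin ?ph_ge0.
Qed.

(* The h-transform turns expected generation sizes into hitting probabilities. *)
Lemma hitB_hr j x : hitB p d B j x * (hr x)%:E = genH j x.
Proof.
elim: j x => [|j IH] x /=.
  by case: ifPn => xB; rewrite ?mul0e // mul1e -hBE hB_in.
case: ifPn => xB; first by rewrite mul0e.
have [mean_x mr_gt0] := mean_out xB.
rewrite -esumZr ?lee_fin ?hr_ge0 //; last first.
  by move=> y _; rewrite mule_ge0 ?lee_fin ?ph_ge0 ?hitB_ge0.
rewrite mean_x -esumZl ?lee_fin ?ltW //; last first.
  by move=> y _; rewrite mule_ge0 ?lee_fin ?genH_ge0.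
apply: eq_esum => y _; rewrite -IH /ph (negbTE xB).
rewrite [LHS]muleAC -EFinM divfK ?gt_eqF ?hr_gt0 //.
by rewrite [RHS]muleA -EFinM muleCA -EFinM muleC.
Qed.

Lemma enterB1 x : enterB p d B x = 1.
Proof.
have enter_hr : enterB p d B x * (hr x)%:E = (hr x)%:E.
  rewrite /enterB -esumZr ?lee_fin ?hr_ge0 //; last by move=> j _; exact: hitB_ge0.
  under eq_esum do rewrite hitB_hr.
  by rewrite -hB_esum_genH hBE.
have enter_ge0 : 0 <= enterB p d B x by apply: esum_ge0 => j _; exact: hitB_ge0.
move: enter_ge0 enter_hr; case: (enterB p d B x) => [r _ r_hr|_|//]; last first.
  by rewrite gt0_mulye ?lte_fin ?hr_gt0.
have : (r * hr x = 1 * hr x)%R by apply: EFin_inj; rewrite mul1r EFinM.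
by move/(mulIf (lt0r_neq0 (hr_gt0 x))) ->.
Qed.

(** * The decorated spine and the B-biased BMC *)

Local Close Scope ereal_scope.

Lemma white_count (cs : seq (S * bool)) : white cs = (count (fun c => c.2) cs == 0%N).
Proof. by rewrite /white; elim: cs => //= -[y []] cs ->. Qed.

Lemma decoLoc_rot z cs i : z \notin B -> (i < size cs)%N ->
  decoLoc p d B (z, true) (rot i cs) =
  if (nth (z, false) cs i).2 && (count (fun c => c.2) cs == 1%N) then
    (size cs)%:R * d z (size cs) * (\prod_(c <- cs) p z c.1) *
      hr (nth (z, false) cs i).1 / hr z
  else 0.
Proof.
move=> zNB i_lt; set ws := drop i.+1 cs ++ take i cs.
have rot_cs : rot i cs = nth (z, false) cs i :: ws by rewrite /rot (drop_nth (z, false) i_lt).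
have perm_cs : perm_eq (nth (z, false) cs i :: ws) cs by rewrite -rot_cs perm_rot.
have count_cs : count (fun c => c.2) cs = ((nth (z, false) cs i).2 + count (fun c => c.2) ws)%N.
  by rewrite -(permP perm_cs).
have prod_cs : \prod_(c <- cs) p z c.1 = p z (nth (z, false) cs i).1 * \prod_(c <- ws) p z c.1.
  by rewrite -(perm_big _ perm_cs) big_cons.
have size_cs : size cs = (size ws).+1 by rewrite -(perm_size perm_cs).
have [_ mr_gt0] := mean_out zNB.
rewrite rot_cs; move: count_cs prod_cs.
case: (nth (z, false) cs i) => y [] /= count_cs prod_cs.
  rewrite /decoLoc /= (negbTE zNB) white_count count_cs add1n eqSS.
  case: ifP => // _; rewrite /dsb /ph (negbTE zNB) prod_cs size_cs.
  by field; rewrite ?gt_eqF ?hr_gt0.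
by rewrite /decoLoc /= (negbTE zNB); case: ifP; rewrite ?kill_out ?mulr0.
Qed.

Lemma bbLoc_blue z cs : z \notin B -> (0 < size cs)%N ->
  bbLoc p d B (z, true) cs =
  if count (fun c => c.2) cs == 1%N then
    d z (size cs) * (\prod_(c <- cs) p z c.1) *
      (\sum_(c <- cs | c.2) hr c.1) / hr z
  else 0.
Proof.
move=> zNB cs_gt0; rewrite /bbLoc /= (negbTE zNB); case: ifP => // _.
have sum_hr_gt0 : 0 < \sum_(c <- cs) hr c.1.
  case: cs cs_gt0 => // c cs _; rewrite big_cons.
  by rewrite ltr_pwDl ?hr_gt0 // sumr_ge0 // => *; exact: hr_ge0.
by field; rewrite ?gt_eqF ?hr_gt0.
Qed.

Lemma decoLoc_bmc z (blue : bool) cs : ~~ blue || (z \in B) ->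
  decoLoc p d B (z, blue) cs = bmcw p d z cs.
Proof. by rewrite /decoLoc => ->. Qed.

Lemma bbLoc_bmc z (blue : bool) cs : ~~ blue || (z \in B) ->
  bbLoc p d B (z, blue) cs = bmcw p d z cs.
Proof. by rewrite /bbLoc => ->. Qed.

Lemma bmcw_perm z cs cs' : perm_eq cs cs' -> bmcw p d z cs = bmcw p d z cs'.
Proof.
move=> perm_cs; rewrite /bmcw /white (perm_all _ perm_cs) (perm_size perm_cs).
by rewrite (perm_big _ perm_cs).
Qed.

(* Rotating the children moves the spine child, which the decoration lists first,
   through every position; on average this is the B-biased rule. *)
Lemma sum_decoLoc_rot a cs : (0 < size cs)%N ->
  \sum_(i < size cs) decoLoc p d B a (rot i cs) = (size cs)%:R * bbLoc p d B a cs.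
Proof.
case: a => z blue cs_gt0; have [white_a|] := boolP (~~ blue || (z \in B)).
  under eq_bigr => i _ do
    rewrite decoLoc_bmc // (bmcw_perm _ (permEl (perm_rot i cs))).
  by rewrite bbLoc_bmc // sumr_const card_ord mulr_natl.
rewrite negb_or negbK => /andP[-> zNB].
under eq_bigr => i _ do rewrite decoLoc_rot //.
rewrite bbLoc_blue //; case: ifP => count1; last first.
  by rewrite mulr0 big1 // => i _; rewrite andbF.
under eq_bigr do rewrite andbT.
rewrite -big_mkcond /= [\sum_(c <- cs | c.2) _](big_nth (z, false)) big_mkord.
rewrite mulr_sumr mulr_suml mulr_sumr; apply: eq_bigr => i _.
by field; rewrite ?gt_eqF ?hr_gt0.
Qed.

Lemma decoLoc_nil a : decoLoc p d B a [::] = bbLoc p d B a [::].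
Proof.
case: a => z blue; rewrite /decoLoc /bbLoc; case: ifP => // /negbT.
by rewrite negb_or negbK => /andP[_ zNB] /=; rewrite kill_out // mulr0.
Qed.

Lemma decoLoc_ge0 a cs : 0 <= decoLoc p d B a cs.
Proof.
have dsb_ge0 z n : 0 <= dsb d z n.
  by rewrite /dsb divr_ge0 ?mulr_ge0 ?ler0n // /mr fine_ge0 // mean_ge0.
have prod_ge0 z ws : 0 <= \prod_(c <- ws) p z c.1 by apply: prodr_ge0.
case: a => z blue; rewrite /decoLoc; case: ifP => [_|]; first exact: bmcw_ge0.
move/negbT; rewrite negb_or negbK => /andP[_ zNB].
case: cs => [|[y [|]] ws]; rewrite ?kill_out ?mulr0 //.
  by case: ifP => // _; rewrite mulr_ge0 ?ph_ge0 // mulr_ge0.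
by case: ifP => // _; rewrite kill_out ?mulr0.
Qed.

Lemma bbLoc_ge0 a cs : 0 <= bbLoc p d B a cs.
Proof.
case: a => z blue; rewrite /bbLoc; case: ifP => [_|_]; first exact: bmcw_ge0.
case: ifP => // _; have sum_hr_ge0 (P : pred (S * bool)) : 0 <= \sum_(c <- cs | P c) hr c.1.
  by apply: sumr_ge0 => c _; exact: hr_ge0.
by rewrite !mulr_ge0 ?invr_ge0 ?hr_ge0 ?divr_ge0 // prodr_ge0.
Qed.

Lemma bbLoc_perm a cs cs' : perm_eq cs cs' -> bbLoc p d B a cs = bbLoc p d B a cs'.
Proof.
move=> perm_cs; case: a => z blue; rewrite /bbLoc (bmcw_perm _ perm_cs) (perm_size perm_cs).
by rewrite !(perm_big _ perm_cs) (permP perm_cs).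
Qed.

Lemma perm_iso_marks (ts Us : seq tree) :
  perm_iso ts Us -> perm_eq (map (@mark S) ts) (map (@mark S) Us).
Proof.
move=> [us' [perm_us iso_ts]]; apply: Permutation_perm_eq.
rewrite (_ : map _ ts = map (@mark S) us'); first exact: Permutation_map.
by elim: iso_ts => //= t u ts' us'' /tiso_mark -> _ ->.
Qed.

Lemma esum_perm_iso_rot i (G : seq tree -> \bar R) (Us : seq tree) :
  (\esum_(ts in [set ts | perm_iso ts Us]) G ts =
   \esum_(ts in [set ts | perm_iso ts Us]) G (rot i ts))%E.
Proof.
have perm_iso_rot (ts : seq tree) : perm_iso (rot i ts) ts.
  exact/perm_iso_Permutation/Permutation_rot.
apply: reindex_esum; split=> [ts /= ts_Us|ts us _ _ /rot_inj //|ts /= ts_Us].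
  exact: perm_iso_trans (perm_iso_rot _) ts_Us.
exists (rotr i ts); last by rewrite rotrK.
by apply: perm_iso_trans ts_Us; exact/perm_iso_Permutation/Permutation_rot.
Qed.

(* Rotations preserve the class, so both sides may be averaged over them. *)
Lemma esum_decoLoc_class (D : tree -> R) a (Us : seq tree) : (forall t, 0 <= D t) ->
  (\esum_(ts in [set ts | perm_iso ts Us])
     (decoLoc p d B a (map (@mark S) ts) * \prod_(u <- ts) D u)%:E =
   \esum_(ts in [set ts | perm_iso ts Us])
     (bbLoc p d B a (map (@mark S) ts) * \prod_(u <- ts) D u)%:E)%E.
Proof.
move=> D0; have prod_ge0 ts : 0 <= \prod_(u <- ts) D u by apply: prodr_ge0.
case: Us => [|U Us'].
  rewrite (_ : [set ts | perm_iso ts [::]] = [set [::]]); last first.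
    by apply/seteqP; split => ts /perm_iso_nil.
  by rewrite !esum_set1 ?lee_fin ?mulr_ge0 ?decoLoc_ge0 ?bbLoc_ge0 //= decoLoc_nil.
set Us := U :: Us'; set k := size Us; have k_gt0 : (0 < k)%N by [].
suff : (k%:R%:E * (\esum_(ts in [set ts | perm_iso ts Us])
          (decoLoc p d B a (map (@mark S) ts) * \prod_(u <- ts) D u)%:E) =
        k%:R%:E * (\esum_(ts in [set ts | perm_iso ts Us])
          (bbLoc p d B a (map (@mark S) ts) * \prod_(u <- ts) D u)%:E))%E.
  move/(congr1 (fun e => (k%:R^-1)%:E * e)%E).
  by rewrite !muleA -!EFinM mulVf ?pnatr_eq0 -?lt0n // !mul1e.
rewrite [LHS]mule_natl (_ : forall X : \bar R, X *+ k = \sum_(i < k) X)%E; last first.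
  by move=> X; rewrite sumr_const card_ord.
under eq_bigr => i _ do rewrite (esum_perm_iso_rot i).
rewrite -esum_sum; last by move=> ts i _ _; rewrite lee_fin mulr_ge0 ?decoLoc_ge0.
rewrite -esumZl_EFin // => [|ts _]; last by rewrite lee_fin mulr_ge0 ?bbLoc_ge0.
apply: eq_esum => ts ts_Us; rewrite sumEFin -EFinM; congr _%:E.
have size_ts : size (map (@mark S) ts) = k by rewrite size_map (perm_iso_size ts_Us).
rewrite mulrA -size_ts -sum_decoLoc_rot ?size_ts // mulr_suml; apply: eq_bigr => i _.
by rewrite map_rot (perm_big _ (permEl (perm_rot i ts))).
Qed.

Lemma esum_bbLoc_class (D D' : tree -> R) a (Us : seq tree) :
  (forall t, 0 <= D t) -> (forall t, 0 <= D' t) ->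
  (forall U, \esum_(u in [set u | tiso u U]) (D u)%:E =
             \esum_(u in [set u | tiso u U]) (D' u)%:E)%E ->
  (\esum_(ts in [set ts | perm_iso ts Us])
     (bbLoc p d B a (map (@mark S) ts) * \prod_(u <- ts) D u)%:E =
   \esum_(ts in [set ts | perm_iso ts Us])
     (bbLoc p d B a (map (@mark S) ts) * \prod_(u <- ts) D' u)%:E)%E.
Proof.
move=> D0 D'0 eq_class_sums.
have bbLoc_Us (F : tree -> R) ts : perm_iso ts Us ->
    ((bbLoc p d B a (map (@mark S) ts) * \prod_(u <- ts) F u)%:E =
     (bbLoc p d B a (map (@mark S) Us))%:E * (\prod_(u <- ts) F u)%:E)%E.
  by move=> ts_Us; rewrite (bbLoc_perm _ (perm_iso_marks ts_Us)) EFinM.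
rewrite (eq_esum (bbLoc_Us D)) [RHS](eq_esum (bbLoc_Us D')).
rewrite !esumZl_EFin ?bbLoc_ge0 ?(eq_perm_iso_prod_sums D0 D'0 eq_class_sums) //.
- by move=> ts _; rewrite lee_fin prodr_ge0.
- by move=> ts _; rewrite lee_fin prodr_ge0.
Qed.

Lemma esum_tw_class n (T : tree) :
  (\esum_(t in [set t | tiso t T]) (tw (decoLoc p d B) n t)%:E =
   \esum_(t in [set t | tiso t T]) (tw (bbLoc p d B) n t)%:E)%E.
Proof.
elim: n T => [|n IH] [a Us]; first by apply: eq_esum => -[b ts].
have nodeE : set_bij [set ts | perm_iso ts Us] [set t | tiso t (Node a Us)] (Node a).
  split=> [ts ts_Us|ts us _ _ [] //|[b ts] /tisoE[-> ts_Us]]; last by exists ts.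
  exact/tisoE.
rewrite !(reindex_esum _ _ _ _ nodeE) /= esum_decoLoc_class; last exact: tw_ge0 decoLoc_ge0 n.
by apply: esum_bbLoc_class => //; [exact: tw_ge0 decoLoc_ge0 n | exact: tw_ge0 bbLoc_ge0 n].
Qed.

Lemma tlaw_decoLoc_bbLoc x n (T : tree) :
  tlaw (decoLoc p d B) x n T = tlaw (bbLoc p d B) x n T.
Proof.
rewrite /tlaw; have [markT|markNT] := pselect (mark T = (x, true)).
  rewrite (_ : [set t | _ /\ _] = [set t | tiso t T]); first exact: esum_tw_class.
  by apply/seteqP; split=> t /= => [[]//|tT]; rewrite (tiso_mark tT).
rewrite (_ : [set t | _ /\ _] = set0) ?esum_set0 //.
by apply/seteqP; split=> t //= [markt tT]; apply: markNT; rewrite -(tiso_mark tT).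
Qed.

End BranchingMarkovChain.

Theorem mainTheorem3 (R : realType) (S : countType)
  (p : S -> S -> R) (d : S -> nat -> R) (B : set S) (x : S) :
  (forall y z, 0 <= p y z) ->
  (forall y, (\esum_(z in [set: S]) (p y z)%:E = 1)%E) ->
  (forall y n, 0 <= d y n) ->
  (forall y, (\esum_(n in [set: nat]) (d y n)%:E = 1)%E) ->
  (forall y z, (green p d y z < +oo)%E) ->
  norming_region p d B ->
  (forall (n : nat) (T : mtree S),
      tlaw (decoLoc p d B) x n T = tlaw (bbLoc p d B) x n T)
  /\ enterB p d B x = 1%E.
Proof.
move=> p0 psum d0 dsum green_fin B_norming; split.
  by move=> n T; exact: tlaw_decoLoc_bbLoc.
exact: enterB1.
Qed.
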